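(* Let $f:\mathcal{D}_M\to\mathbb{R}$ be continuous, where $M>0$ and $$\mathcal{D}_M=\{(t,x,y,z):\ 0\le t\le 1,\ |x|\le M_0M,\ |y|\le M_1M,\ |z|\le M_2M\},\qquad M_0=\tfrac{1}{12},\ M_1=\tfrac18,\ M_2=\tfrac12 .$$ Assume there are constants $L_0,L_1,L_2\ge 0$ such that $|f(t,x,y,z)|\le M$ for all $(t,x,y,z)\in\mathcal{D}_M$, $$|f(t,x_2,y_2,z_2)-f(t,x_1,y_1,z_1)|\le L_0|x_2-x_1|+L_1|y_2-y_1|+L_2|z_2-z_1|$$ for all $(t,x_i,y_i,z_i)\in\mathcal{D}_M$ ($i=1,2$), and $q:=L_0M_0+L_1M_1+L_2M_2<1$. Consider the iteration: $\varphi_0(t)=f(t,0,0,0)$ and, for $k=0,1,\dots$, $$u_k(t)=\int_0^1G_0(t,s)\varphi_k(s)\,ds,\quad y_k(t)=\int_0^1G_1(t,s)\varphi_k(s)\,ds,\quad z_k(t)=\int_0^1G_2(t,s)\varphi_k(s)\,ds,$$ $$\varphi_{k+1}(t)=f(t,u_k(t),y_k(t),z_k(t)),$$ and set $p_k=\dfrac{q^k}{1-q}\|\varphi_1-\varphi_0\|$, where $\|\cdot\|$ is the maximum norm on $[0,1]$. Let $u$ be the (unique) solution of the boundary value problem $$u'''(t)=f(t,u(t),u'(t),u''(t)),\ 0<t<1,\qquad u(0)=0,\ u'(0)=0,\ u'(1)=0,$$ satisfying $|u(t)|\le M_0M$, $|u'(t)|\le M_1M$, $|u''(t)|\le M_2M$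 on $[0,1]$. Then the iterative method converges and for all $k\ge 0$ $$\|u_k-u\|\le M_0p_k,\qquad \|u_k'-u'\|\le M_1p_k,\qquad \|u_k''-u''\|\le M_2p_k .$$
   Context: The kernels are $G_0(t,s)=\frac{s}{2}(t^2-2t+s)$ for $0\le s\le t\le1$ and $G_0(t,s)=\frac{t^2}{2}(s-1)$ for $0\le t\le s\le 1$; $G_1(t,s)=s(t-1)$ for $0\le s\le t\le 1$ and $G_1(t,s)=t(s-1)$ for $0\le t\le s\le 1$; $G_2(t,s)=s$ for $0\le s\le t\le 1$ and $G_2(t,s)=s-1$ for $0\le t\le s\le 1$. ($G_0$ is the Green function of $u'''=\varphi$, $u(0)=u'(0)=u'(1)=0$, and $G_1=\partial_tG_0$, $G_2=\partial_t^2G_0$.) The constants satisfy $M_n=\max_{0\le t\le 1}\int_0^1|G_n(t,s)|\,ds$ for $n=0,1,2$. Under these hypotheses the boundary value problem has exactly one solution with the stated bounds. *)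

From Stdlib Require Import Reals Lra.
From Coquelicot Require Import Coquelicot.
Open Scope R_scope.

Definition M0 : R := 1/12.
Definition M1 : R := 1/8.
Definition M2 : R := 1/2.

Definition G0 (t s : R) : R :=
  if Rle_dec s t then s / 2 * (t ^ 2 - 2 * t + s) else t ^ 2 / 2 * (s - 1).
Definition G1 (t s : R) : R :=
  if Rle_dec s t then s * (t - 1) else t * (s - 1).
Definition G2 (t s : R) : R :=
  if Rle_dec s t then s else s - 1.

Definition inD (M t x y z : R) : Prop :=
  0 <= t <= 1 /\ Rabs x <= M0 * M /\ Rabs y <= M1 * M /\ Rabs z <= M2 * M.

Definition continuous_on_D (M : R) (f : R -> R -> R -> R -> R) : Prop :=
  forall t x y z, inD M t x y z ->
  forall eps : R, 0 < eps -> exists delta : R, 0 < delta /\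
    forall t' x' y' z', inD M t' x' y' z' ->
      Rabs (t' - t) < delta -> Rabs (x' - x) < delta ->
      Rabs (y' - y) < delta -> Rabs (z' - z) < delta ->
      Rabs (f t' x' y' z' - f t x y z) < eps.

Fixpoint phi (f : R -> R -> R -> R -> R) (k : nat) (t : R) : R :=
  match k with
  | O => f t 0 0 0
  | S k' => f t (RInt (fun s => G0 t s * phi f k' s) 0 1)
                (RInt (fun s => G1 t s * phi f k' s) 0 1)
                (RInt (fun s => G2 t s * phi f k' s) 0 1)
  end.

Definition uk (f : R -> R -> R -> R -> R) (k : nat) (t : R) : R :=
  RInt (fun s => G0 t s * phi f k s) 0 1.
Definition yk (f : R -> R -> R -> R -> R) (k : nat) (t : R) : R :=
  RInt (fun s => G1 t s * phi f k s) 0 1.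
Definition zk (f : R -> R -> R -> R -> R) (k : nat) (t : R) : R :=
  RInt (fun s => G2 t s * phi f k s) 0 1.

Definition supnorm01 (g : R -> R) : R :=
  real (Lub_Rbar (fun r => exists t, 0 <= t <= 1 /\ r = Rabs (g t))).

Definition continuous_on01 (g : R -> R) : Prop :=
  forall t, 0 <= t <= 1 -> forall eps : R, 0 < eps -> exists delta : R, 0 < delta /\
    forall t', 0 <= t' <= 1 -> Rabs (t' - t) < delta -> Rabs (g t' - g t) < eps.

From Stdlib Require Import Reals Lra Psatz.
From Coquelicot Require Import Coquelicot.
Open Scope R_scope.

(** [G0] is the Green function of [u''' = F], [u(0) = u'(0) = u'(1) = 0],
    and [G1], [G2] are its first two [t]-derivatives; [M0], [M1], [M2] are
    the maxima over [t] of [int_0^1 |Gn(t,s)| ds].  Hence the solution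
    satisfies [u^(n) = int Gn F] with [F = f(., u, u', u'')], i.e. [F] is a
    fixed point of the Picard map [h |-> f(., int G0 h, int G1 h, int G2 h)],
    whose iterates are the [phi_k].  On continuous functions bounded by [M]
    this map is a contraction of ratio [q = L0 M0 + L1 M1 + L2 M2] for the
    maximum norm, which gives [|phi_k - F| <= q^k / (1 - q) |phi_1 - phi_0|];
    the kernel bounds transfer this estimate to [u_k^(n) - u^(n)]. *)

Definition clamp (x : R) : R := Rmax 0 (Rmin x 1).

Lemma clamp_in01 x : 0 <= clamp x <= 1.
Proof. unfold clamp, Rmax, Rmin. repeat destruct Rle_dec; lra. Qed.

Lemma clamp_id x : 0 <= x <= 1 -> clamp x = x.
Proof. unfold clamp, Rmax, Rmin. repeat destruct Rle_dec; lra. Qed.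

Lemma Rabs_clamp_minus_le x y : Rabs (clamp y - clamp x) <= Rabs (y - x).
Proof.
  unfold clamp, Rmax, Rmin. repeat destruct Rle_dec; unfold Rabs; repeat destruct Rcase_abs; lra.
Qed.

Lemma continuous_on01_ext (g1 g2 : R -> R) :
  (forall x, 0 <= x <= 1 -> g1 x = g2 x) -> continuous_on01 g1 -> continuous_on01 g2.
Proof.
  intros E Hc t Ht eps Heps. destruct (Hc t Ht eps Heps) as [d [Hd H]].
  exists d. split; [exact Hd|]. intros t' Ht' Hlt. rewrite <- !E by assumption. auto.
Qed.

Lemma continuous_on01_of_continuous (g : R -> R) :
  (forall x, continuous g x) -> continuous_on01 g.
Proof.
  intros Hc t _ eps Heps.
  destruct (proj2 (continuity_pt_filterlim g t) (Hc t) eps Heps) as [d [Hd H]].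
  exists d. split; [exact Hd|]. intros t' _ Hlt.
  destruct (Req_dec t' t) as [->|Hne]; [rewrite Rminus_diag, Rabs_R0; lra|].
  apply (H t'). split; [split; [exact I|auto]|exact Hlt].
Qed.

Lemma continuous_on01_iff_clamp (g : R -> R) :
  continuous_on01 g <-> forall x, continuous (fun s => g (clamp s)) x.
Proof.
  split.
  - intros Hc x. apply continuity_pt_filterlim. intros eps Heps.
    destruct (Hc (clamp x) (clamp_in01 x) eps Heps) as [d [Hd H]].
    exists d. split; [exact Hd|]. intros y [_ Hy]. simpl in *. unfold R_dist in *.
    apply H; [apply clamp_in01|]. eapply Rle_lt_trans; [apply Rabs_clamp_minus_le|exact Hy].
  - intros Hc. apply (continuous_on01_ext (fun s => g (clamp s))).
    + intros x Hx. rewrite clamp_id; auto.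
    + apply continuous_on01_of_continuous, Hc.
Qed.

Lemma continuous_on01_minus (g1 g2 : R -> R) :
  continuous_on01 g1 -> continuous_on01 g2 -> continuous_on01 (fun s => g1 s - g2 s).
Proof.
  rewrite !continuous_on01_iff_clamp. intros H1 H2 x.
  exact (continuous_minus _ _ x (H1 x) (H2 x)).
Qed.

Lemma continuous_on01_bounded (g : R -> R) :
  continuous_on01 g -> exists B, forall s, 0 <= s <= 1 -> Rabs (g s) <= B.
Proof.
  intros Hc. rewrite continuous_on01_iff_clamp in Hc.
  destruct (continuity_ab_maj (fun s => Rabs (g (clamp s))) 0 1) as [m [Hm _]]; [lra| |].
  - intros c _. apply (continuity_pt_comp (fun s => g (clamp s)) Rabs).
    + apply continuity_pt_filterlim, Hc.
    + apply Rcontinuity_abs.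
  - exists (Rabs (g (clamp m))). intros s Hs.
    specialize (Hm s Hs). simpl in Hm. rewrite clamp_id in Hm; assumption.
Qed.

Lemma bound01_nonneg (g : R -> R) B :
  (forall s, 0 <= s <= 1 -> Rabs (g s) <= B) -> 0 <= B.
Proof. intros Hb. specialize (Hb 0 ltac:(lra)). pose proof (Rabs_pos (g 0)). lra. Qed.

Ltac solve_continuous_poly :=
  intros ?s; apply (@ex_derive_continuous R_AbsRing R_NormedModule); auto_derive; auto.

Lemma RInt_split_at (F g1 g2 : R -> R) x :
  (forall s, continuous g1 s) -> (forall s, continuous g2 s) ->
  (forall s, 0 < s < 1 -> s < x -> F s = g1 s) ->
  (forall s, 0 < s < 1 -> x < s -> F s = g2 s) ->
  ex_RInt F 0 1 /\ RInt F 0 1 = RInt g1 0 (clamp x) + RInt g2 (clamp x) 1.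
Proof.
  intros C1 C2 E1 E2. pose proof (clamp_in01 x) as Hc.
  assert (I1 : ex_RInt F 0 (clamp x)).
  { apply (ex_RInt_ext g1); [|apply (@ex_RInt_continuous R_CompleteNormedModule); auto].
    intros s Hs. rewrite Rmin_left, Rmax_right in Hs by lra. symmetry; apply E1; [lra|].
    unfold clamp, Rmax, Rmin in *. repeat destruct Rle_dec; lra. }
  assert (I2 : ex_RInt F (clamp x) 1).
  { apply (ex_RInt_ext g2); [|apply (@ex_RInt_continuous R_CompleteNormedModule); auto].
    intros s Hs. rewrite Rmin_left, Rmax_right in Hs by lra. symmetry; apply E2; [lra|].
    unfold clamp, Rmax, Rmin in *. repeat destruct Rle_dec; lra. }
  split; [eapply ex_RInt_Chasles; eassumption|].
  rewrite <- (RInt_Chasles F 0 (clamp x) 1 I1 I2).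
  apply f_equal2; apply RInt_ext; intros s Hs; rewrite Rmin_left, Rmax_right in Hs by lra;
    [apply E1|apply E2]; unfold clamp, Rmax, Rmin in *; repeat destruct Rle_dec; lra.
Qed.

Lemma RInt_antiderivative (P p : R -> R) a b :
  (forall x, is_derive P x (p x)) -> (forall x, continuous p x) -> RInt p a b = P b - P a.
Proof. intros HP Hp. apply is_RInt_unique. apply (is_RInt_derive P p); auto. Qed.

Lemma RInt_zero a b : RInt (fun _ => 0) a b = 0.
Proof. rewrite RInt_const. unfold scal; simpl; unfold mult; simpl. ring. Qed.

Lemma abs_RInt01_le_majorant (g K : R -> R) :
  ex_RInt g 0 1 -> ex_RInt K 0 1 -> (forall s, 0 < s < 1 -> Rabs (g s) <= K s) ->
  Rabs (RInt g 0 1) <= RInt K 0 1.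
Proof.
  intros Ig IK Hle. apply Rabs_le. split.
  - replace (- RInt K 0 1) with (RInt (fun s => - K s) 0 1) by exact (RInt_opp K 0 1 IK).
    apply RInt_le; [lra|exact (ex_RInt_opp K 0 1 IK)|exact Ig|].
    intros s Hs. specialize (Hle s Hs). apply Rabs_le_between in Hle. lra.
  - apply RInt_le; [lra|exact Ig|exact IK|].
    intros s Hs. specialize (Hle s Hs). apply Rabs_le_between in Hle. lra.
Qed.

Lemma abs_RInt01_le_support (g : R -> R) K a b :
  ex_RInt g 0 1 -> (forall s, 0 <= s <= 1 -> Rabs (g s) <= K) ->
  (forall s, 0 < s < 1 -> s < a \/ b < s -> g s = 0) -> a <= b ->
  Rabs (RInt g 0 1) <= K * (b - a).
Proof.
  intros Ig Hb Hz Hab. pose proof (bound01_nonneg g K Hb) as HK.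
  pose proof (clamp_in01 a). pose proof (clamp_in01 b).
  assert (Hc : clamp a <= clamp b) by (unfold clamp, Rmax, Rmin; repeat destruct Rle_dec; lra).
  assert (Hc' : clamp b - clamp a <= b - a) by (unfold clamp, Rmax, Rmin; repeat destruct Rle_dec; lra).
  assert (I1 : ex_RInt g 0 (clamp b)) by (apply (ex_RInt_Chasles_1 g 0 _ 1); auto; lra).
  assert (I2 : ex_RInt g (clamp b) 1) by (apply (ex_RInt_Chasles_2 g 0 _ 1); auto; lra).
  assert (I3 : ex_RInt g 0 (clamp a)) by (apply (ex_RInt_Chasles_1 g 0 _ (clamp b)); auto; lra).
  assert (I4 : ex_RInt g (clamp a) (clamp b)) by (apply (ex_RInt_Chasles_2 g 0 _ (clamp b)); auto; lra).
  rewrite <- (RInt_Chasles g 0 (clamp b) 1 I1 I2), <- (RInt_Chasles g 0 (clamp a) (clamp b) I3 I4).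
  rewrite (RInt_ext g (fun _ => 0) 0 (clamp a)), (RInt_ext g (fun _ => 0) (clamp b) 1).
  - rewrite !RInt_zero. unfold plus; simpl. rewrite Rplus_0_l, Rplus_0_r.
    eapply Rle_trans; [apply abs_RInt_le_const; auto; intros t Ht; apply Hb; lra|nra].
  - intros s Hs. rewrite Rmin_left, Rmax_right in Hs by lra. apply Hz; [lra|right].
    unfold clamp, Rmax, Rmin in *; repeat destruct Rle_dec; lra.
  - intros s Hs. rewrite Rmin_left, Rmax_right in Hs by lra. apply Hz; [lra|left].
    unfold clamp, Rmax, Rmin in *; repeat destruct Rle_dec; lra.
Qed.

Definition kernel_op (G : R -> R -> R) (h : R -> R) (t : R) : R :=
  RInt (fun s => G t s * h s) 0 1.

Lemma is_RInt_kernel_op_remainder (G H : R -> R -> R) h x y c :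
  ex_RInt (fun s => G y s * h s) 0 1 -> ex_RInt (fun s => G x s * h s) 0 1 ->
  ex_RInt (fun s => H x s * h s) 0 1 ->
  is_RInt (fun s => (G y s - G x s - c * H x s) * h s) 0 1
    (kernel_op G h y - kernel_op G h x - c * kernel_op H h x).
Proof.
  intros Iy Ix IH. unfold kernel_op.
  apply (is_RInt_ext (fun s => G y s * h s - G x s * h s - c * (H x s * h s))).
  { intros s _. simpl. ring. }
  apply (is_RInt_minus (fun s => G y s * h s - G x s * h s) (fun s => c * (H x s * h s))).
  - exact (is_RInt_minus _ _ 0 1 _ _ (RInt_correct _ _ _ Iy) (RInt_correct _ _ _ Ix)).
  - exact (is_RInt_scal _ 0 1 c _ (RInt_correct _ _ _ IH)).
Qed.

Lemma is_RInt_kernel_op_increment (G : R -> R -> R) h x y :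
  ex_RInt (fun s => G y s * h s) 0 1 -> ex_RInt (fun s => G x s * h s) 0 1 ->
  is_RInt (fun s => (G y s - G x s) * h s) 0 1 (kernel_op G h y - kernel_op G h x).
Proof.
  intros Iy Ix. unfold kernel_op.
  apply (is_RInt_ext (fun s => G y s * h s - G x s * h s)); [intros s _; simpl; ring|].
  exact (is_RInt_minus _ _ 0 1 _ _ (RInt_correct _ _ _ Iy) (RInt_correct _ _ _ Ix)).
Qed.

Lemma kernel_op_minus (G : R -> R -> R) h1 h2 t :
  ex_RInt (fun s => G t s * h1 s) 0 1 -> ex_RInt (fun s => G t s * h2 s) 0 1 ->
  kernel_op G h1 t - kernel_op G h2 t = kernel_op G (fun s => h1 s - h2 s) t.
Proof.
  intros I1 I2. unfold kernel_op. symmetry. apply is_RInt_unique.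
  apply (is_RInt_ext (fun s => G t s * h1 s - G t s * h2 s)); [intros s _; simpl; ring|].
  exact (is_RInt_minus _ _ 0 1 _ _ (RInt_correct _ _ _ I1) (RInt_correct _ _ _ I2)).
Qed.

Lemma kernel_op_abs_le (G : R -> R -> R) h B t :
  ex_RInt (fun s => G t s * h s) 0 1 -> ex_RInt (fun s => Rabs (G t s)) 0 1 ->
  (forall s, 0 <= s <= 1 -> Rabs (h s) <= B) ->
  Rabs (kernel_op G h t) <= RInt (fun s => Rabs (G t s)) 0 1 * B.
Proof.
  intros Ih IG Hb. rewrite Rmult_comm.
  replace (B * RInt (fun s => Rabs (G t s)) 0 1) with (RInt (fun s => B * Rabs (G t s)) 0 1)
    by exact (RInt_scal (fun s => Rabs (G t s)) 0 1 B IG).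
  apply abs_RInt01_le_majorant; [exact Ih|exact (ex_RInt_scal _ 0 1 B IG)|].
  intros s Hs. rewrite Rabs_mult, Rmult_comm.
  apply Rmult_le_compat_r; [apply Rabs_pos|apply Hb; lra].
Qed.

Lemma ex_RInt_piecewise_mult (a b h : R -> R) x :
  (forall s, continuous a s) -> (forall s, continuous b s) -> continuous_on01 h ->
  ex_RInt (fun s => (if Rle_dec s x then a s else b s) * h s) 0 1.
Proof.
  intros Ca Cb Ch. rewrite continuous_on01_iff_clamp in Ch.
  apply (RInt_split_at _ (fun s => a s * h (clamp s)) (fun s => b s * h (clamp s)) x).
  - intros s. exact (continuous_mult a _ s (Ca s) (Ch s)).
  - intros s. exact (continuous_mult b _ s (Cb s) (Ch s)).
  - intros s Hs Hsx. rewrite clamp_id by lra. destruct Rle_dec; [reflexivity|lra].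
  - intros s Hs Hsx. rewrite clamp_id by lra. destruct Rle_dec; [lra|reflexivity].
Qed.

Lemma ex_RInt_G0 x h : continuous_on01 h -> ex_RInt (fun s => G0 x s * h s) 0 1.
Proof.
  apply (ex_RInt_piecewise_mult (fun s => s / 2 * (x ^ 2 - 2 * x + s)) (fun s => x ^ 2 / 2 * (s - 1)));
    solve_continuous_poly.
Qed.

Lemma ex_RInt_G1 x h : continuous_on01 h -> ex_RInt (fun s => G1 x s * h s) 0 1.
Proof.
  apply (ex_RInt_piecewise_mult (fun s => s * (x - 1)) (fun s => x * (s - 1))); solve_continuous_poly.
Qed.

Lemma ex_RInt_G2 x h : continuous_on01 h -> ex_RInt (fun s => G2 x s * h s) 0 1.
Proof.
  apply (ex_RInt_piecewise_mult (fun s => s) (fun s => s - 1)); solve_continuous_poly.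
Qed.

Lemma RInt_abs_G0 t : 0 <= t <= 1 ->
  ex_RInt (fun s => Rabs (G0 t s)) 0 1 /\ RInt (fun s => Rabs (G0 t s)) 0 1 = t ^ 2 / 4 - t ^ 3 / 6.
Proof.
  intros Ht.
  destruct (RInt_split_at (fun s => Rabs (G0 t s))
              (fun s => s / 2 * (2 * t - t ^ 2 - s)) (fun s => t ^ 2 / 2 * (1 - s)) t) as [I E];
    [solve_continuous_poly|solve_continuous_poly| | |].
  - intros s Hs Hst. unfold G0. destruct Rle_dec; [|lra].
    rewrite Rabs_left1; [ring|]. assert (t ^ 2 - 2 * t + s <= 0) by nra. nra.
  - intros s Hs Hst. unfold G0. destruct Rle_dec; [lra|].
    rewrite Rabs_left1; [ring|]. nra.
  - split; [exact I|]. rewrite E, clamp_id by exact Ht.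
    rewrite (RInt_antiderivative (fun s => (2 * t - t ^ 2) * s ^ 2 / 4 - s ^ 3 / 6)),
            (RInt_antiderivative (fun s => t ^ 2 / 2 * (s - s ^ 2 / 2)));
      try solve_continuous_poly; try (intros s; auto_derive; auto; field).
    simpl. field.
Qed.

Lemma RInt_abs_G1 t : 0 <= t <= 1 ->
  ex_RInt (fun s => Rabs (G1 t s)) 0 1 /\ RInt (fun s => Rabs (G1 t s)) 0 1 = t * (1 - t) / 2.
Proof.
  intros Ht.
  destruct (RInt_split_at (fun s => Rabs (G1 t s))
              (fun s => s * (1 - t)) (fun s => t * (1 - s)) t) as [I E];
    [solve_continuous_poly|solve_continuous_poly| | |].
  - intros s Hs Hst. unfold G1. destruct Rle_dec; [|lra]. rewrite Rabs_left1; [ring|nra].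
  - intros s Hs Hst. unfold G1. destruct Rle_dec; [lra|]. rewrite Rabs_left1; [ring|nra].
  - split; [exact I|]. rewrite E, clamp_id by exact Ht.
    rewrite (RInt_antiderivative (fun s => (1 - t) * s ^ 2 / 2)),
            (RInt_antiderivative (fun s => t * (s - s ^ 2 / 2)));
      try solve_continuous_poly; try (intros s; auto_derive; auto; field).
    simpl. field.
Qed.

Lemma RInt_abs_G2 t : 0 <= t <= 1 ->
  ex_RInt (fun s => Rabs (G2 t s)) 0 1 /\
  RInt (fun s => Rabs (G2 t s)) 0 1 = (t ^ 2 + (1 - t) ^ 2) / 2.
Proof.
  intros Ht.
  destruct (RInt_split_at (fun s => Rabs (G2 t s)) (fun s => s) (fun s => 1 - s) t) as [I E];
    [solve_continuous_poly|solve_continuous_poly| | |].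
  - intros s Hs Hst. unfold G2. destruct Rle_dec; [|lra]. rewrite Rabs_right; [ring|lra].
  - intros s Hs Hst. unfold G2. destruct Rle_dec; [lra|]. rewrite Rabs_left1; [ring|lra].
  - split; [exact I|]. rewrite E, clamp_id by exact Ht.
    rewrite (RInt_antiderivative (fun s => s ^ 2 / 2)), (RInt_antiderivative (fun s => s - s ^ 2 / 2));
      try solve_continuous_poly; try (intros s; auto_derive; auto; field).
    simpl. field.
Qed.

Lemma kernel_op_G0_bound h B t :
  continuous_on01 h -> (forall s, 0 <= s <= 1 -> Rabs (h s) <= B) -> 0 <= t <= 1 ->
  Rabs (kernel_op G0 h t) <= M0 * B.
Proof.
  intros Hh Hb Ht. pose proof (bound01_nonneg h B Hb). destruct (RInt_abs_G0 t Ht) as [I E].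
  eapply Rle_trans; [exact (kernel_op_abs_le G0 h B t (ex_RInt_G0 t h Hh) I Hb)|].
  rewrite E. apply Rmult_le_compat_r; [lra|]. unfold M0.
  assert (0 <= (1 - t) ^ 2 * (1 + 2 * t)) by (apply Rmult_le_pos; nra). nra.
Qed.

Lemma kernel_op_G1_bound h B t :
  continuous_on01 h -> (forall s, 0 <= s <= 1 -> Rabs (h s) <= B) -> 0 <= t <= 1 ->
  Rabs (kernel_op G1 h t) <= M1 * B.
Proof.
  intros Hh Hb Ht. pose proof (bound01_nonneg h B Hb). destruct (RInt_abs_G1 t Ht) as [I E].
  eapply Rle_trans; [exact (kernel_op_abs_le G1 h B t (ex_RInt_G1 t h Hh) I Hb)|].
  rewrite E. apply Rmult_le_compat_r; [lra|]. unfold M1. pose proof (pow2_ge_0 (1 - 2 * t)). nra.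
Qed.

Lemma kernel_op_G2_bound h B t :
  continuous_on01 h -> (forall s, 0 <= s <= 1 -> Rabs (h s) <= B) -> 0 <= t <= 1 ->
  Rabs (kernel_op G2 h t) <= M2 * B.
Proof.
  intros Hh Hb Ht. pose proof (bound01_nonneg h B Hb). destruct (RInt_abs_G2 t Ht) as [I E].
  eapply Rle_trans; [exact (kernel_op_abs_le G2 h B t (ex_RInt_G2 t h Hh) I Hb)|].
  rewrite E. apply Rmult_le_compat_r; [lra|]. unfold M2. nra.
Qed.

Lemma is_derive_of_remainder (g : R -> R) x l :
  (forall eps, 0 < eps -> exists d, 0 < d /\ forall y, Rabs (y - x) < d ->
     Rabs (g y - g x - (y - x) * l) <= eps * Rabs (y - x)) ->
  is_derive g x l.
Proof.
  intros H. apply is_derive_Reals. intros eps Heps.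
  destruct (H (eps / 2) ltac:(lra)) as [d [Hd Hy]].
  exists (mkposreal d Hd). intros k Hk Hlt. simpl in Hlt.
  specialize (Hy (x + k)). replace (x + k - x) with k in Hy by ring.
  replace ((g (x + k) - g x) / k - l) with ((g (x + k) - g x - k * l) / k) by (field; exact Hk).
  assert (Hk0 : 0 < Rabs k) by (apply Rabs_pos_lt; exact Hk).
  rewrite Rabs_div by exact Hk. apply Rlt_div_l; [exact Hk0|].
  eapply Rle_lt_trans; [apply Hy, Hlt|]. nra.
Qed.

Lemma is_derive_of_quadratic_remainder (g : R -> R) x l K :
  (forall y, Rabs (g y - g x - (y - x) * l) <= K * (y - x) ^ 2) -> is_derive g x l.
Proof.
  intros H. apply is_derive_of_remainder. intros eps Heps.
  pose proof (Rabs_pos K) as HK.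
  exists (eps / (Rabs K + 1)). split; [apply Rdiv_lt_0_compat; lra|].
  intros y Hy. apply Rlt_div_r in Hy; [|lra].
  eapply Rle_trans; [apply H|].
  rewrite <- (pow2_abs (y - x)). pose proof (Rabs_pos (y - x)). pose proof (Rle_abs K). nra.
Qed.

Lemma G0_quadratic_remainder x y s : 0 <= s <= 1 ->
  Rabs (G0 y s - G0 x s - (y - x) * G1 x s) <= 2 * (y - x) ^ 2.
Proof.
  intros Hs. unfold G0, G1. pose proof (pow2_ge_0 (y - x)). apply Rabs_le.
  destruct (Rle_dec s y), (Rle_dec s x).
  - replace (s / 2 * (y ^ 2 - 2 * y + s) - s / 2 * (x ^ 2 - 2 * x + s) - (y - x) * (s * (x - 1)))
      with (s * (y - x) ^ 2 / 2) by field. split; nra.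
  - replace (s / 2 * (y ^ 2 - 2 * y + s) - x ^ 2 / 2 * (s - 1) - (y - x) * (x * (s - 1)))
      with ((s - 1) * (y - x) ^ 2 / 2 + (y - s) ^ 2 / 2) by field.
    assert ((y - s) ^ 2 <= (y - x) ^ 2) by nra. pose proof (pow2_ge_0 (y - s)). split; nra.
  - replace (y ^ 2 / 2 * (s - 1) - s / 2 * (x ^ 2 - 2 * x + s) - (y - x) * (s * (x - 1)))
      with ((s - 1) * (y - x) ^ 2 / 2 - (x - s) * ((x - s) / 2 + (y - x))) by field.
    assert (0 <= (x - s) * ((x - s) / 2 + (x - y))) by nra.
    assert ((x - s) * ((x - s) / 2 + (x - y)) <= 2 * (y - x) ^ 2) by nra. split; nra.
  - replace (y ^ 2 / 2 * (s - 1) - x ^ 2 / 2 * (s - 1) - (y - x) * (x * (s - 1)))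
      with ((s - 1) * (y - x) ^ 2 / 2) by field. split; nra.
Qed.

Lemma G1_remainder_le x y s : Rabs (G1 y s - G1 x s - (y - x) * G2 x s) <= Rabs (y - x).
Proof.
  unfold G1, G2. destruct (Rle_dec s y), (Rle_dec s x); unfold Rabs; repeat destruct Rcase_abs; nra.
Qed.

Lemma G1_remainder_outside x y s : s < Rmin x y \/ Rmax x y < s ->
  G1 y s - G1 x s - (y - x) * G2 x s = 0.
Proof.
  unfold G1, G2, Rmin, Rmax. destruct (Rle_dec s y), (Rle_dec s x), (Rle_dec x y); intros [H|H];
    first [ring | lra].
Qed.

Lemma G2_increment_le x y s : Rabs (G2 y s - G2 x s) <= 1.
Proof. unfold G2. destruct (Rle_dec s y), (Rle_dec s x); unfold Rabs; repeat destruct Rcase_abs; lra. Qed.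

Lemma G2_increment_outside x y s : s < Rmin x y \/ Rmax x y < s -> G2 y s - G2 x s = 0.
Proof.
  unfold G2, Rmin, Rmax. destruct (Rle_dec s y), (Rle_dec s x), (Rle_dec x y); intros [H|H];
    first [ring | lra].
Qed.

Lemma Rmax_minus_Rmin x y : Rmax x y - Rmin x y = Rabs (y - x).
Proof. unfold Rmin, Rmax. destruct Rle_dec; unfold Rabs; destruct Rcase_abs; lra. Qed.

(* Stated at every real [x]: the [Derive] in the theorem is two-sided, also at [t = 0] and [t = 1]. *)
Lemma is_derive_kernel_op_G0 h x :
  continuous_on01 h -> is_derive (kernel_op G0 h) x (kernel_op G1 h x).
Proof.
  intros Hh. destruct (continuous_on01_bounded h Hh) as [B Hb].
  apply (is_derive_of_quadratic_remainder _ _ _ (2 * B)). intros y.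
  pose proof (is_RInt_kernel_op_remainder G0 G1 h x y (y - x)
                (ex_RInt_G0 y h Hh) (ex_RInt_G0 x h Hh) (ex_RInt_G1 x h Hh)) as HI.
  rewrite <- (is_RInt_unique _ _ _ _ HI).
  replace (2 * B * (y - x) ^ 2) with ((1 - 0) * (2 * (y - x) ^ 2 * B)) by ring.
  apply abs_RInt_le_const; [lra|eexists; exact HI|].
  intros s Hs. rewrite Rabs_mult.
  apply Rmult_le_compat; [apply Rabs_pos|apply Rabs_pos|apply G0_quadratic_remainder, Hs|apply Hb, Hs].
Qed.

Lemma is_derive_kernel_op_G1 h x :
  continuous_on01 h -> is_derive (kernel_op G1 h) x (kernel_op G2 h x).
Proof.
  intros Hh. destruct (continuous_on01_bounded h Hh) as [B Hb].
  apply (is_derive_of_quadratic_remainder _ _ _ B). intros y.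
  pose proof (is_RInt_kernel_op_remainder G1 G2 h x y (y - x)
                (ex_RInt_G1 y h Hh) (ex_RInt_G1 x h Hh) (ex_RInt_G2 x h Hh)) as HI.
  rewrite <- (is_RInt_unique _ _ _ _ HI).
  replace (B * (y - x) ^ 2) with (Rabs (y - x) * B * (Rmax x y - Rmin x y))
    by (rewrite Rmax_minus_Rmin, <- (pow2_abs (y - x)); ring).
  apply abs_RInt01_le_support; [eexists; exact HI| | |apply Rminmax].
  - intros s Hs. rewrite Rabs_mult.
    apply Rmult_le_compat; [apply Rabs_pos|apply Rabs_pos|apply G1_remainder_le|apply Hb, Hs].
  - intros s _ Hout. rewrite G1_remainder_outside by exact Hout. ring.
Qed.

Lemma kernel_op_G2_lipschitz h B x y :
  continuous_on01 h -> (forall s, 0 <= s <= 1 -> Rabs (h s) <= B) ->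
  Rabs (kernel_op G2 h y - kernel_op G2 h x) <= B * Rabs (y - x).
Proof.
  intros Hh Hb.
  pose proof (is_RInt_kernel_op_increment G2 h x y (ex_RInt_G2 y h Hh) (ex_RInt_G2 x h Hh)) as HI.
  rewrite <- (is_RInt_unique _ _ _ _ HI), <- Rmax_minus_Rmin, <- (Rmult_1_l B).
  apply abs_RInt01_le_support; [eexists; exact HI| | |apply Rminmax].
  - intros s Hs. rewrite Rabs_mult.
    apply Rmult_le_compat; [apply Rabs_pos|apply Rabs_pos|apply G2_increment_le|apply Hb, Hs].
  - intros s _ Hout. rewrite G2_increment_outside by exact Hout. ring.
Qed.

Lemma kernel_op_G2_const c y : 0 <= y <= 1 -> kernel_op G2 (fun _ => c) y = c * (y - 1 / 2).
Proof.
  intros Hy. unfold kernel_op.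
  destruct (RInt_split_at (fun s => G2 y s * c) (fun s => s * c) (fun s => (s - 1) * c) y) as [_ E];
    [solve_continuous_poly|solve_continuous_poly| | |].
  - intros s _ Hsy. unfold G2. destruct Rle_dec; [reflexivity|lra].
  - intros s _ Hsy. unfold G2. destruct Rle_dec; [lra|reflexivity].
  - rewrite E, clamp_id by exact Hy.
    rewrite (RInt_antiderivative (fun s => s ^ 2 / 2 * c)),
            (RInt_antiderivative (fun s => (s ^ 2 / 2 - s) * c));
      try solve_continuous_poly; try (intros s; auto_derive; auto; field).
    simpl. field.
Qed.

Lemma is_derive_kernel_op_G2 h x :
  continuous_on01 h -> 0 < x < 1 -> is_derive (kernel_op G2 h) x (h x).
Proof.
  intros Hh Hx. apply is_derive_of_remainder. intros eps Heps.
  destruct (Hh x ltac:(lra) eps Heps) as [d [Hd Hc]].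
  exists (Rmin d (Rmin x (1 - x))). split; [repeat apply Rmin_glb_lt; lra|].
  intros y Hxy.
  assert (Hd' : Rabs (y - x) < d) by (eapply Rlt_le_trans; [exact Hxy|apply Rmin_l]).
  assert (Hy : 0 <= y <= 1).
  { pose proof (Rmin_r d (Rmin x (1 - x))). pose proof (Rmin_l x (1 - x)).
    pose proof (Rmin_r x (1 - x)). apply Rabs_lt_between in Hxy. lra. }
  set (hx := fun s => h s - h x).
  assert (Cx : continuous_on01 (fun _ => h x)) by apply continuous_on01_of_continuous, continuous_const.
  assert (Chx : continuous_on01 hx) by (apply continuous_on01_minus; assumption).
  assert (E : kernel_op G2 h y - kernel_op G2 h x - (y - x) * h x = kernel_op G2 hx y - kernel_op G2 hx x).
  { unfold hx.
    rewrite <- (kernel_op_minus G2 h (fun _ => h x) y), <- (kernel_op_minus G2 h (fun _ => h x) x)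
      by (apply ex_RInt_G2; assumption).
    rewrite !kernel_op_G2_const by lra. ring. }
  pose proof (is_RInt_kernel_op_increment G2 hx x y (ex_RInt_G2 y hx Chx) (ex_RInt_G2 x hx Chx)) as HI.
  rewrite E, <- (is_RInt_unique _ _ _ _ HI), <- Rmax_minus_Rmin.
  apply abs_RInt01_le_support; [eexists; exact HI| | |apply Rminmax].
  - intros s Hs. unfold hx. rewrite Rabs_mult.
    destruct (Rlt_dec s (Rmin x y)) as [Hlt|Hge];
      [rewrite G2_increment_outside by (left; exact Hlt); rewrite Rabs_R0; lra|].
    destruct (Rlt_dec (Rmax x y) s) as [Hgt|Hle];
      [rewrite G2_increment_outside by (right; exact Hgt); rewrite Rabs_R0; lra|].
    rewrite <- (Rmult_1_l eps). apply Rmult_le_compat; try apply Rabs_pos.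
    + apply G2_increment_le.
    + left. apply Hc; [exact Hs|]. revert Hge Hle Hd'. unfold Rmin, Rmax. destruct Rle_dec;
        unfold Rabs; repeat destruct Rcase_abs; lra.
  - intros s _ Hout. rewrite G2_increment_outside by exact Hout. ring.
Qed.

Lemma continuous_on01_kernel_op_G0 h : continuous_on01 h -> continuous_on01 (kernel_op G0 h).
Proof.
  intros Hh. apply continuous_on01_of_continuous. intros x.
  apply (@ex_derive_continuous R_AbsRing R_NormedModule).
  eexists. apply is_derive_kernel_op_G0, Hh.
Qed.

Lemma continuous_on01_kernel_op_G1 h : continuous_on01 h -> continuous_on01 (kernel_op G1 h).
Proof.
  intros Hh. apply continuous_on01_of_continuous. intros x.
  apply (@ex_derive_continuous R_AbsRing R_NormedModule).
  eexists. apply is_derive_kernel_op_G1, Hh.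
Qed.

Lemma continuous_on01_kernel_op_G2 h : continuous_on01 h -> continuous_on01 (kernel_op G2 h).
Proof.
  intros Hh t _ eps Heps. destruct (continuous_on01_bounded h Hh) as [B Hb].
  pose proof (bound01_nonneg h B Hb).
  exists (eps / (B + 1)). split; [apply Rdiv_lt_0_compat; lra|].
  intros t' _ Hlt. apply Rlt_div_r in Hlt; [|lra].
  eapply Rle_lt_trans; [apply (kernel_op_G2_lipschitz h B t t' Hh Hb)|].
  pose proof (Rabs_pos (t' - t)). nra.
Qed.

Lemma Derive_kernel_op_G0 h t :
  continuous_on01 h -> Derive (kernel_op G0 h) t = kernel_op G1 h t.
Proof. intros Hh. apply is_derive_unique, is_derive_kernel_op_G0, Hh. Qed.

Lemma Derive2_kernel_op_G0 h t :
  continuous_on01 h -> Derive (Derive (kernel_op G0 h)) t = kernel_op G2 h t.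
Proof.
  intros Hh. rewrite (Derive_ext _ (kernel_op G1 h) t (fun x => Derive_kernel_op_G0 h x Hh)).
  apply is_derive_unique, is_derive_kernel_op_G1, Hh.
Qed.

Lemma RInt01_eq_0 (g : R -> R) : (forall s, 0 < s < 1 -> g s = 0) -> RInt g 0 1 = 0.
Proof.
  intros H. rewrite (RInt_ext g (fun _ => 0)); [apply RInt_zero|].
  intros s Hs. rewrite Rmin_left, Rmax_right in Hs by lra. apply H, Hs.
Qed.

Lemma kernel_op_G0_at_0 h : kernel_op G0 h 0 = 0.
Proof.
  apply RInt01_eq_0. intros s Hs. unfold G0. destruct Rle_dec; [lra|]. field.
Qed.

Lemma kernel_op_G1_at_0 h : kernel_op G1 h 0 = 0.
Proof.
  apply RInt01_eq_0. intros s Hs. unfold G1. destruct Rle_dec; [lra|]. ring.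
Qed.

Lemma kernel_op_G1_at_1 h : kernel_op G1 h 1 = 0.
Proof.
  apply RInt01_eq_0. intros s Hs. unfold G1. destruct Rle_dec; [|lra]. ring.
Qed.

Lemma continuous_on01_derive_0_const (g : R -> R) :
  continuous_on01 g -> (forall x, 0 < x < 1 -> is_derive g x 0) ->
  forall t, 0 <= t <= 1 -> g t = g 0.
Proof.
  intros Hc Hd t Ht. rewrite continuous_on01_iff_clamp in Hc.
  destruct (MVT_gen (fun s => g (clamp s)) 0 t (fun _ => 0)) as [c [_ Hm]].
  - intros x Hx. rewrite Rmin_left, Rmax_right in Hx by lra.
    apply (is_derive_ext_loc g); [|apply Hd; lra].
    assert (Hr : 0 < Rmin x (1 - x)) by (apply Rmin_glb_lt; lra).
    exists (mkposreal _ Hr). intros y Hy. change (Rabs (y - x) < Rmin x (1 - x)) in Hy.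
    pose proof (Rmin_l x (1 - x)). pose proof (Rmin_r x (1 - x)).
    apply Rabs_lt_between in Hy. rewrite clamp_id; [reflexivity|lra].
  - intros x _. apply continuity_pt_filterlim, Hc.
  - rewrite !clamp_id in Hm by lra. lra.
Qed.

Lemma continuous_on01_same_derive (g1 g2 dg : R -> R) :
  continuous_on01 g1 -> continuous_on01 g2 ->
  (forall x, 0 < x < 1 -> is_derive g1 x (dg x)) -> (forall x, 0 < x < 1 -> is_derive g2 x (dg x)) ->
  forall t, 0 <= t <= 1 -> g1 t - g2 t = g1 0 - g2 0.
Proof.
  intros C1 C2 D1 D2.
  apply (continuous_on01_derive_0_const (fun t => g1 t - g2 t)); [apply continuous_on01_minus; assumption|].
  intros x Hx. replace 0 with (dg x - dg x) by ring.
  exact (is_derive_minus g1 g2 x _ _ (D1 x Hx) (D2 x Hx)).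
Qed.

Theorem green_representation (F u du ddu : R -> R) :
  continuous_on01 F ->
  continuous_on01 u -> continuous_on01 du -> continuous_on01 ddu ->
  (forall t, 0 < t < 1 -> is_derive u t (du t)) ->
  (forall t, 0 < t < 1 -> is_derive du t (ddu t)) ->
  (forall t, 0 < t < 1 -> is_derive ddu t (F t)) ->
  u 0 = 0 -> du 0 = 0 -> du 1 = 0 ->
  forall t, 0 <= t <= 1 ->
  u t = kernel_op G0 F t /\ du t = kernel_op G1 F t /\ ddu t = kernel_op G2 F t.
Proof.
  intros CF Cu Cdu Cddu Du Ddu Dddu u0 du0 du1.
  set (c := ddu 0 - kernel_op G2 F 0).
  assert (Hddu : forall t, 0 <= t <= 1 -> ddu t = kernel_op G2 F t + c).
  { intros t Ht.
    pose proof (continuous_on01_same_derive ddu (kernel_op G2 F) F Cddu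
                  (continuous_on01_kernel_op_G2 F CF) Dddu
                  (fun x Hx => is_derive_kernel_op_G2 F x CF Hx) t Ht).
    unfold c. lra. }
  assert (Hdu : forall t, 0 <= t <= 1 -> du t = kernel_op G1 F t + c * t).
  { assert (Dlin : forall x, is_derive (fun t => kernel_op G1 F t + c * t) x (kernel_op G2 F x + c)).
    { intros x. apply (is_derive_plus _ (fun t => c * t)); [apply is_derive_kernel_op_G1, CF|].
      auto_derive; [exact I|ring]. }
    assert (Clin : continuous_on01 (fun t => kernel_op G1 F t + c * t)).
    { apply continuous_on01_of_continuous. intros x.
      apply (@ex_derive_continuous R_AbsRing R_NormedModule). eexists. apply Dlin. }
    assert (D1 : forall x, 0 < x < 1 -> is_derive (fun t => kernel_op G1 F t + c * t) x (ddu x)).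
    { intros x Hx. rewrite Hddu by lra. apply Dlin. }
    intros t Ht. pose proof (continuous_on01_same_derive du _ ddu Cdu Clin Ddu D1 t Ht) as H.
    rewrite du0, kernel_op_G1_at_0 in H. lra. }
  assert (Hc : c = 0).
  { specialize (Hdu 1 ltac:(lra)). rewrite du1, kernel_op_G1_at_1 in Hdu. lra. }
  assert (D0 : forall x, 0 < x < 1 -> is_derive (kernel_op G0 F) x (du x)).
  { intros x Hx. rewrite Hdu, Hc, Rmult_0_l, Rplus_0_r by lra. apply is_derive_kernel_op_G0, CF. }
  intros t Ht.
  pose proof (continuous_on01_same_derive u (kernel_op G0 F) du Cu
                (continuous_on01_kernel_op_G0 F CF) Du D0 t Ht) as H.
  rewrite u0, kernel_op_G0_at_0 in H.
  rewrite Hdu, Hddu, Hc by exact Ht. repeat split; lra.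
Qed.

Lemma Rabs_le_supnorm01 (g : R -> R) K :
  (forall t, 0 <= t <= 1 -> Rabs (g t) <= K) ->
  forall t, 0 <= t <= 1 -> Rabs (g t) <= supnorm01 g.
Proof.
  intros H t Ht. unfold supnorm01.
  set (S := fun r => exists t, 0 <= t <= 1 /\ r = Rabs (g t)).
  destruct (Lub_Rbar_correct S) as [Hub Hlub].
  assert (HK : Rbar_le (Lub_Rbar S) K) by (apply Hlub; intros r [s [Hs ->]]; apply H, Hs).
  specialize (Hub (Rabs (g t)) (ex_intro _ t (conj Ht eq_refl))).
  destruct (Lub_Rbar S); simpl in HK, Hub |- *; [exact Hub|contradiction|contradiction].
Qed.

Lemma supnorm01_le (g : R -> R) K :
  (forall t, 0 <= t <= 1 -> Rabs (g t) <= K) -> supnorm01 g <= K.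
Proof.
  intros H. unfold supnorm01.
  set (S := fun r => exists t, 0 <= t <= 1 /\ r = Rabs (g t)).
  destruct (Lub_Rbar_correct S) as [Hub Hlub].
  assert (HK : Rbar_le (Lub_Rbar S) K) by (apply Hlub; intros r [s [Hs ->]]; apply H, Hs).
  specialize (Hub (Rabs (g 0)) (ex_intro _ 0 (conj (conj (Rle_refl 0) Rle_0_1) eq_refl))).
  destruct (Lub_Rbar S); simpl in HK, Hub |- *; [exact HK|contradiction|contradiction].
Qed.

Lemma continuous_on01_compose_D M (f : R -> R -> R -> R -> R) (a b c : R -> R) :
  continuous_on_D M f -> continuous_on01 a -> continuous_on01 b -> continuous_on01 c ->
  (forall t, 0 <= t <= 1 -> inD M t (a t) (b t) (c t)) ->
  continuous_on01 (fun t => f t (a t) (b t) (c t)).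
Proof.
  intros Hf Ca Cb Cc Hin t Ht eps Heps.
  destruct (Hf _ _ _ _ (Hin t Ht) eps Heps) as [d [Hd P]].
  destruct (Ca t Ht d Hd) as [da [Hda Pa]].
  destruct (Cb t Ht d Hd) as [db [Hdb Pb]].
  destruct (Cc t Ht d Hd) as [dc [Hdc Pc]].
  exists (Rmin (Rmin d da) (Rmin db dc)). split; [repeat apply Rmin_glb_lt; assumption|].
  intros t' Ht' Hlt.
  pose proof (Rmin_l (Rmin d da) (Rmin db dc)). pose proof (Rmin_r (Rmin d da) (Rmin db dc)).
  pose proof (Rmin_l d da). pose proof (Rmin_r d da). pose proof (Rmin_l db dc). pose proof (Rmin_r db dc).
  apply P; [apply Hin, Ht'|lra|apply Pa|apply Pb|apply Pc]; auto; lra.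
Qed.

Definition C01_ball (M : R) (h : R -> R) : Prop :=
  continuous_on01 h /\ forall s, 0 <= s <= 1 -> Rabs (h s) <= M.

Section Picard.

Variables (f : R -> R -> R -> R -> R) (M L0 L1 L2 : R).
Hypothesis HM : 0 <= M.
Hypothesis Hcont : continuous_on_D M f.
Hypotheses (HL0 : 0 <= L0) (HL1 : 0 <= L1) (HL2 : 0 <= L2).
Hypothesis Hbound : forall t x y z, inD M t x y z -> Rabs (f t x y z) <= M.
Hypothesis Hlip : forall t x1 y1 z1 x2 y2 z2, inD M t x1 y1 z1 -> inD M t x2 y2 z2 ->
  Rabs (f t x2 y2 z2 - f t x1 y1 z1)
    <= L0 * Rabs (x2 - x1) + L1 * Rabs (y2 - y1) + L2 * Rabs (z2 - z1).

Let q := L0 * M0 + L1 * M1 + L2 * M2.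

Definition picard_map (h : R -> R) (t : R) : R :=
  f t (kernel_op G0 h t) (kernel_op G1 h t) (kernel_op G2 h t).

Lemma inD_kernel_ops h t :
  C01_ball M h -> 0 <= t <= 1 -> inD M t (kernel_op G0 h t) (kernel_op G1 h t) (kernel_op G2 h t).
Proof.
  intros [Hc Hb] Ht. repeat split; try apply Ht.
  - apply kernel_op_G0_bound; assumption.
  - apply kernel_op_G1_bound; assumption.
  - apply kernel_op_G2_bound; assumption.
Qed.

Lemma picard_map_ball h : C01_ball M h -> C01_ball M (picard_map h).
Proof.
  intros Hh. split.
  - destruct Hh as [Hc Hb]. apply (continuous_on01_compose_D M); [exact Hcont| | | |].
    + apply continuous_on01_kernel_op_G0, Hc.
    + apply continuous_on01_kernel_op_G1, Hc.
    + apply continuous_on01_kernel_op_G2, Hc.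
    + intros t Ht. apply inD_kernel_ops; [split|]; assumption.
  - intros s Hs. apply Hbound, inD_kernel_ops; assumption.
Qed.

Lemma picard_map_contraction h1 h2 d t :
  C01_ball M h1 -> C01_ball M h2 -> (forall s, 0 <= s <= 1 -> Rabs (h1 s - h2 s) <= d) ->
  0 <= t <= 1 -> Rabs (picard_map h1 t - picard_map h2 t) <= q * d.
Proof.
  intros B1 B2 Hd Ht. pose proof (proj1 B1) as C1. pose proof (proj1 B2) as C2.
  assert (C12 : continuous_on01 (fun s => h1 s - h2 s)) by (apply continuous_on01_minus; assumption).
  unfold picard_map. eapply Rle_trans; [apply Hlip; apply inD_kernel_ops; assumption|].
  rewrite (kernel_op_minus G0 h1 h2 t (ex_RInt_G0 t h1 C1) (ex_RInt_G0 t h2 C2)),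
          (kernel_op_minus G1 h1 h2 t (ex_RInt_G1 t h1 C1) (ex_RInt_G1 t h2 C2)),
          (kernel_op_minus G2 h1 h2 t (ex_RInt_G2 t h1 C1) (ex_RInt_G2 t h2 C2)).
  pose proof (Rmult_le_compat_l L0 _ _ HL0 (kernel_op_G0_bound _ d t C12 Hd Ht)).
  pose proof (Rmult_le_compat_l L1 _ _ HL1 (kernel_op_G1_bound _ d t C12 Hd Ht)).
  pose proof (Rmult_le_compat_l L2 _ _ HL2 (kernel_op_G2_bound _ d t C12 Hd Ht)).
  unfold q. lra.
Qed.

Lemma phi_ball k : C01_ball M (phi f k).
Proof.
  induction k as [|k IH]; [|exact (picard_map_ball _ IH)].
  assert (H0 : forall t, 0 <= t <= 1 -> inD M t 0 0 0).
  { intros t Ht. unfold inD, M0, M1, M2. rewrite Rabs_R0. repeat split; lra. }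
  split.
  - apply (continuous_on01_compose_D M f (fun _ => 0) (fun _ => 0) (fun _ => 0)); [exact Hcont| | | |exact H0];
      apply continuous_on01_of_continuous, continuous_const.
  - intros s Hs. apply Hbound, H0, Hs.
Qed.

Variable F : R -> R.
Hypothesis HF : C01_ball M F.
Hypothesis Hfix : forall t, 0 <= t <= 1 -> picard_map F t = F t.
Hypothesis Hq : q < 1.

Lemma C01_ball_dist h1 h2 :
  C01_ball M h1 -> C01_ball M h2 -> forall t, 0 <= t <= 1 -> Rabs (h1 t - h2 t) <= 2 * M.
Proof.
  intros [_ B1] [_ B2] t Ht. pose proof (B1 t Ht). pose proof (B2 t Ht).
  pose proof (Rabs_triang (h1 t) (- h2 t)). rewrite Rabs_Ropp in *. unfold Rminus. lra.
Qed.

Lemma phi_dist_geometric k t : 0 <= t <= 1 ->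
  Rabs (phi f k t - F t) <= q ^ k * supnorm01 (fun s => phi f 0 s - F s).
Proof.
  revert t. induction k as [|k IH]; intros t Ht.
  - rewrite pow_O, Rmult_1_l. exact (Rabs_le_supnorm01 _ _ (C01_ball_dist _ _ (phi_ball 0) HF) t Ht).
  - change (phi f (S k) t) with (picard_map (phi f k) t). rewrite <- (Hfix t Ht), <- tech_pow_Rmult, Rmult_assoc.
    apply picard_map_contraction; [apply phi_ball|exact HF|exact IH|exact Ht].
Qed.

Lemma supnorm01_phi0_dist_le :
  supnorm01 (fun s => phi f 0 s - F s) <= supnorm01 (fun s => phi f 1 s - phi f 0 s) / (1 - q).
Proof.
  set (e := supnorm01 (fun s => phi f 0 s - F s)).
  set (D := supnorm01 (fun s => phi f 1 s - phi f 0 s)).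
  assert (He : e <= D + q * e).
  { apply supnorm01_le. intros t Ht.
    replace (phi f 0 t - F t) with (- (phi f 1 t - phi f 0 t) + (picard_map (phi f 0) t - picard_map F t))
      by (rewrite Hfix by exact Ht; change (phi f 1 t) with (picard_map (phi f 0) t); ring).
    eapply Rle_trans; [apply Rabs_triang|]. rewrite Rabs_Ropp. apply Rplus_le_compat.
    - exact (Rabs_le_supnorm01 _ _ (C01_ball_dist _ _ (phi_ball 1) (phi_ball 0)) t Ht).
    - apply picard_map_contraction; [apply phi_ball|exact HF| |exact Ht].
      exact (Rabs_le_supnorm01 _ _ (C01_ball_dist _ _ (phi_ball 0) HF)). }
  apply Rle_div_r; lra.
Qed.

Lemma phi_dist_apriori k t : 0 <= t <= 1 ->
  Rabs (phi f k t - F t) <= q ^ k / (1 - q) * supnorm01 (fun s => phi f 1 s - phi f 0 s).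
Proof.
  intros Ht. eapply Rle_trans; [exact (phi_dist_geometric k t Ht)|].
  unfold Rdiv. rewrite Rmult_assoc, (Rmult_comm (/ (1 - q))).
  apply Rmult_le_compat_l; [apply pow_le; unfold q, M0, M1, M2; lra|exact supnorm01_phi0_dist_le].
Qed.

Lemma uk_apriori_estimates k t : 0 <= t <= 1 ->
  let p := q ^ k / (1 - q) * supnorm01 (fun s => phi f 1 s - phi f 0 s) in
  Rabs (uk f k t - kernel_op G0 F t) <= M0 * p /\
  Rabs (Derive (uk f k) t - kernel_op G1 F t) <= M1 * p /\
  Rabs (Derive (Derive (uk f k)) t - kernel_op G2 F t) <= M2 * p.
Proof.
  intros Ht p. destruct (phi_ball k) as [Ck _], HF as [CF _].
  assert (Cd : continuous_on01 (fun s => phi f k s - F s)) by (apply continuous_on01_minus; assumption).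
  change (uk f k) with (kernel_op G0 (phi f k)).
  rewrite Derive2_kernel_op_G0, Derive_kernel_op_G0 by exact Ck.
  rewrite (kernel_op_minus G0 _ _ t (ex_RInt_G0 t _ Ck) (ex_RInt_G0 t _ CF)),
          (kernel_op_minus G1 _ _ t (ex_RInt_G1 t _ Ck) (ex_RInt_G1 t _ CF)),
          (kernel_op_minus G2 _ _ t (ex_RInt_G2 t _ Ck) (ex_RInt_G2 t _ CF)).
  repeat split;
    [apply kernel_op_G0_bound|apply kernel_op_G1_bound|apply kernel_op_G2_bound];
    solve [exact Cd | exact Ht | exact (phi_dist_apriori k)].
Qed.

End Picard.

Lemma geometric_tail_lt q D eps : 0 <= q < 1 -> 0 < eps ->
  exists N, forall k, (N <= k)%nat -> q ^ k / (1 - q) * D < eps.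
Proof.
  intros Hq Heps. pose proof (Rabs_pos D). pose proof (Rle_abs D).
  destruct (pow_lt_1_zero q ltac:(rewrite Rabs_right; lra) (eps * (1 - q) / (Rabs D + 1))) as [N HN].
  { apply Rdiv_lt_0_compat; [apply Rmult_lt_0_compat|]; lra. }
  exists N. intros k Hk. specialize (HN k Hk).
  rewrite Rabs_right in HN by (apply Rle_ge, pow_le; lra).
  assert (Hlt : q ^ k * (Rabs D + 1) < eps * (1 - q)).
  { replace (eps * (1 - q)) with (eps * (1 - q) / (Rabs D + 1) * (Rabs D + 1)) by (field; lra).
    apply Rmult_lt_compat_r; lra. }
  pose proof (pow_le q k (proj1 Hq)).
  replace (q ^ k / (1 - q) * D) with (q ^ k * D / (1 - q)) by (field; lra).
  apply Rlt_div_l; nra.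
Qed.

Theorem theorem3
  (f : R -> R -> R -> R -> R) (M L0 L1 L2 : R)
  (HM : 0 < M)
  (Hcont : continuous_on_D M f)
  (HL0 : 0 <= L0) (HL1 : 0 <= L1) (HL2 : 0 <= L2)
  (Hbound : forall t x y z, inD M t x y z -> Rabs (f t x y z) <= M)
  (Hlip : forall t x1 y1 z1 x2 y2 z2, inD M t x1 y1 z1 -> inD M t x2 y2 z2 ->
     Rabs (f t x2 y2 z2 - f t x1 y1 z1)
       <= L0 * Rabs (x2 - x1) + L1 * Rabs (y2 - y1) + L2 * Rabs (z2 - z1))
  (Hq : L0 * M0 + L1 * M1 + L2 * M2 < 1)
  (u du ddu : R -> R)
  (Hu_c : continuous_on01 u) (Hdu_c : continuous_on01 du) (Hddu_c : continuous_on01 ddu)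
  (Hu_d : forall t, 0 < t < 1 -> is_derive u t (du t))
  (Hdu_d : forall t, 0 < t < 1 -> is_derive du t (ddu t))
  (Hddu_d : forall t, 0 < t < 1 -> is_derive ddu t (f t (u t) (du t) (ddu t)))
  (Hbc0 : u 0 = 0) (Hbc1 : du 0 = 0) (Hbc2 : du 1 = 0)
  (Hub : forall t, 0 <= t <= 1 ->
     Rabs (u t) <= M0 * M /\ Rabs (du t) <= M1 * M /\ Rabs (ddu t) <= M2 * M) :
  let q := L0 * M0 + L1 * M1 + L2 * M2 in
  let p := fun k : nat =>
    q ^ k / (1 - q) * supnorm01 (fun t => phi f 1 t - phi f 0 t) in
  (* the iterative method converges (uniformly on [0,1], with derivatives) *)
  (forall eps : R, 0 < eps -> exists N : nat, forall k : nat, (N <= k)%nat ->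
     forall t, 0 <= t <= 1 ->
       Rabs (uk f k t - u t) < eps /\
       Rabs (Derive (uk f k) t - du t) < eps /\
       Rabs (Derive (Derive (uk f k)) t - ddu t) < eps) /\
  (* and the a priori error estimates *)
  (forall (k : nat) (t : R), 0 <= t <= 1 ->
       Rabs (uk f k t - u t) <= M0 * p k /\
       Rabs (Derive (uk f k) t - du t) <= M1 * p k /\
       Rabs (Derive (Derive (uk f k)) t - ddu t) <= M2 * p k).
Proof.
  intros q p.
  assert (HM0 : 0 <= M) by lra.
  set (F := fun t => f t (u t) (du t) (ddu t)).
  assert (HuD : forall t, 0 <= t <= 1 -> inD M t (u t) (du t) (ddu t))
    by (intros t Ht; split; [exact Ht|exact (Hub t Ht)]).
  assert (HF : C01_ball M F).
  { split; [apply (continuous_on01_compose_D M); assumption|].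
    intros t Ht. apply Hbound, HuD, Ht. }
  pose proof (green_representation F u du ddu (proj1 HF) Hu_c Hdu_c Hddu_c Hu_d Hdu_d Hddu_d
                Hbc0 Hbc1 Hbc2) as Hrep.
  assert (Hfix : forall t, 0 <= t <= 1 -> picard_map f F t = F t).
  { intros t Ht. unfold picard_map. destruct (Hrep t Ht) as (<- & <- & <-). reflexivity. }
  assert (Herr : forall k t, 0 <= t <= 1 ->
            Rabs (uk f k t - u t) <= M0 * p k /\
            Rabs (Derive (uk f k) t - du t) <= M1 * p k /\
            Rabs (Derive (Derive (uk f k)) t - ddu t) <= M2 * p k).
  { intros k t Ht. destruct (Hrep t Ht) as (-> & -> & ->).
    exact (uk_apriori_estimates f M L0 L1 L2 HM0 Hcont HL0 HL1 HL2 Hbound Hlip F HF Hfix Hq k t Ht). }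
  split; [|exact Herr].
  intros eps Heps.
  assert (Hq0 : 0 <= q < 1) by (unfold q, M0, M1, M2 in *; split; lra).
  destruct (geometric_tail_lt q (supnorm01 (fun t => phi f 1 t - phi f 0 t)) eps Hq0 Heps) as [N HN].
  exists N. intros k Hk t Ht. specialize (HN k Hk). fold (p k) in HN.
  destruct (Herr k t Ht) as (E0 & E1 & E2).
  pose proof (Rabs_pos (uk f k t - u t)). unfold M0, M1, M2 in *. lra.
Qed.
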